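(* Let $k>1$, let $F=F(a_1,\dots,a_k)$ and $A_{2k}=\{a_1^{\pm1},\dots,a_k^{\pm1}\}$. Let $c\ge 1$ and let $Z$ be the set of all cyclically reduced words $x$ over $A_{2k}$ such that \[ C_{2k}(x)\ge -\frac{c}{2}+|x|\frac{\log_2(2k-1)}{2}. \] Then there exists $n_0>1$ such that for every $n\ge n_0$, \[ \frac{\gamma(n,Z)}{\gamma(n,CR)}\ge 1-\frac{1}{2^c}. \]
   Context: $CR$ denotes the set of all cyclically reduced words over $A_{2k}$ (viewed as elements of $F$), and for $S\subseteq F$, $\gamma(n,S)$ is the number of $x\in S$ with $|x|=n$. Kolmogorov complexity: fix a universal Turing machine computing a universal partial recursive function $\phi:\{0,1\}^\ast\to\{0,1\}^\ast$, and for $x\in\{0,1\}^\ast$ let $C(x)=\min\{|p|:\phi(p)=x\}$. Fix a recursive bijection $h:A_{2k}^\ast\to\{0,1\}^\ast$ and for $x\in A_{2k}^\ast$ let $C_{2k}(x)=C(h(x))$. *)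

From mathcomp Require Import all_boot.
From Stdlib Require Import Reals ClassicalEpsilon.

Set Implicit Arguments.
Unset Strict Implicit.
Unset Printing Implicit Defensive.

Inductive rterm : Type :=
| RZero : rterm
| RSucc : rterm
| RProj : nat -> rterm
| RComp : rterm -> list rterm -> rterm
| RPrim : rterm -> rterm -> rterm
| RMu   : rterm -> rterm.

Inductive reval : rterm -> seq nat -> nat -> Prop :=
| reZero v : reval RZero v 0
| reSucc x : reval RSucc [:: x] x.+1
| reProj i v : i < size v -> reval (RProj i) v (nth 0 v i)
| reComp f gs v ys y : revals gs v ys -> reval f ys y -> reval (RComp f gs) v y
| rePrim0 f g v y : reval f v y -> reval (RPrim f g) (0 :: v) y
| rePrimS f g n v r y : reval (RPrim f g) (n :: v) r ->
    reval g (n :: r :: v) y -> reval (RPrim f g) (n.+1 :: v) y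
| reMu f v n : reval f (n :: v) 0 ->
    (forall m, m < n -> exists y, reval f (m :: v) y.+1) -> reval (RMu f) v n
with revals : list rterm -> seq nat -> seq nat -> Prop :=
| resNil v : revals [::] v [::]
| resCons g gs v y ys : reval g v y -> revals gs v ys -> revals (g :: gs) v (y :: ys).

Definition partial_recursive (psi : nat -> option nat) : Prop :=
  exists t : rterm, forall x y, reval t [:: x] y <-> psi x = Some y.

(* standard bijection {0,1}^* -> nat : s |-> (binary "1s") - 1 *)
Definition nat_of_bits (s : seq bool) : nat :=
  (foldl (fun acc (b : bool) => (acc.*2 + b)%N) 1 s).-1.

Definition partial_recursive_str (f : seq bool -> option (seq bool)) : Prop :=
  exists psi : nat -> option nat, partial_recursive psi /\
    forall p, psi (nat_of_bits p) = omap nat_of_bits (f p).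

(* self-delimiting pairing <e, p> := e with doubled bits, then 01, then p *)
Definition pair_bits (e p : seq bool) : seq bool :=
  flatten [seq [:: b; b] | b <- e] ++ [:: false; true] ++ p.

Definition universal_prf (phi : seq bool -> option (seq bool)) : Prop :=
  partial_recursive_str phi /\
  forall f, partial_recursive_str f ->
    exists e : seq bool, forall p, phi (pair_bits e p) = f p.

Definition pbool (P : Prop) : bool :=
  if excluded_middle_informative P then true else false.

Definition KC_pred (phi : seq bool -> option (seq bool)) (x : seq bool) : pred nat :=
  fun n => pbool (exists p, size p = n /\ phi p = Some x).

(* (the default value 0 never occurs for a universal phi) *)
Definition KC (phi : seq bool -> option (seq bool)) (x : seq bool) : nat :=
  match excluded_middle_informative (exists n, KC_pred phi x n) with
  | left H => ex_minn H
  | right _ => 0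
  end.

(* a letter (i, s) stands for a_{i+1} if s = false, a_{i+1}^{-1} if s = true *)
Definition letter (k : nat) : finType := ('I_k * bool)%type.
Definition word (k : nat) := seq (letter k).

Definition linv k (a : letter k) : letter k := (a.1, ~~ a.2).

Definition reduced_word k (w : word k) : bool :=
  let fix red (w : word k) : bool :=
    match w with
    | a :: ((b :: _) as t) => (b != linv a) && red t
    | _ => true
    end in red w.

Definition cyc_reduced k (w : word k) : bool :=
  reduced_word w &&
  match w with
  | [::] => true
  | a :: _ => last a w != linv a
  end.

Definition C2k k (phi : seq bool -> option (seq bool)) (h : word k -> seq bool)
  (x : word k) : nat := KC phi (h x).

Definition letter_code k (a : letter k) : nat := ((nat_of_ord a.1).*2 + a.2)%N.
Definition word_code k (w : word k) : nat := CodeSeq.code (map (@letter_code k) w).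

Definition recursive_bijection k (h : word k -> seq bool) : Prop :=
  bijective h /\
  exists psi : nat -> option nat, partial_recursive psi /\
    forall w, psi (word_code w) = Some (nat_of_bits (h w)).

Definition gamma k (n : nat) (S : word k -> Prop) : nat :=
  #|[set t : n.-tuple (letter k) | pbool (S (tval t))]|.

Definition CR k : word k -> Prop := fun w => cyc_reduced w.

Definition log2 (x : R) : R := (ln x / ln 2)%R.

Definition Zset k phi h (c : R) : word k -> Prop := fun x =>
  cyc_reduced x /\
  (INR (C2k phi h x) >= - c / 2 + INR (size x) * log2 (INR (2 * k - 1)) / 2)%R.

(* Cyclically reduced words of length n are at least as many as the k^n
   positive words, while at most 2^M words have complexity below M, since
   distinct words need distinct shortest programs.  The threshold defining Z
   makes 2^M about 2^(-c/2) (2k-1)^(n/2), and (2k-1)^(1/2) < k, so the words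
   that fail the complexity bound are eventually at most a 2^(-c) fraction of
   the cyclically reduced ones. *)
From mathcomp Require Import all_boot zify.
From Stdlib Require Import Reals Lra ZArith ClassicalEpsilon.

Set Implicit Arguments.
Unset Strict Implicit.
Unset Printing Implicit Defensive.

Lemma pboolP (P : Prop) : pbool P = true <-> P.
Proof. by rewrite /pbool; case: excluded_middle_informative. Qed.

Lemma partial_recursive_str_id : partial_recursive_str (fun p => Some p).
Proof.
exists Some; split=> // ; exists (RProj 0) => x y; split.
- by move=> H; inversion H; subst.
- by case=> <-; apply: (@reProj 0 [:: x]).
Qed.

Section Complexity.

Variable phi : seq bool -> option (seq bool).
Hypothesis phi_universal : universal_prf phi.

Lemma KC_witness (x : seq bool) : exists p, size p = KC phi x /\ phi p = Some x.
Proof.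
case: phi_universal => _ /(_ _ partial_recursive_str_id) [e phi_e].
have ex_prog : exists n, KC_pred phi x n.
  by exists (size (pair_bits e x)); apply/pboolP; exists (pair_bits e x).
rewrite /KC; case: excluded_middle_informative => [H|//].
by case: ex_minnP => m /pboolP [p [<- phi_p]] _; exists p.
Qed.

Lemma nseq_false_true_inj (a b : nat) (s1 s2 : seq bool) :
  nseq a false ++ true :: s1 = nseq b false ++ true :: s2 -> s1 = s2.
Proof. by elim: a b => [|a IH] [|b] //= [] // /IH. Qed.

(* Importing Reals rebinds [^] on nat to [Nat.pow], hence the explicit [expn].
   A shortest program p, of size < M, is padded to the M-tuple 0...01p. *)
Lemma card_KC_lt (T : finType) (e : T -> seq bool) (M : nat) :
  injective e -> #|[set t | KC phi (e t) < M]| <= expn 2 M.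
Proof.
move=> e_inj.
have [prog prog_spec] : exists prog : seq bool -> seq bool,
    forall x, size (prog x) = KC phi x /\ phi (prog x) = Some x.
  by apply: (choice (fun x p => size p = KC phi x /\ phi p = Some x)) => x;
     apply: KC_witness.
pose pad (p : seq bool) : M.-tuple bool :=
  insubd (nseq_tuple M false) (nseq (M - 1 - size p) false ++ true :: p).
have val_pad p : size p < M -> val (pad p) = nseq (M - 1 - size p) false ++ true :: p.
  by move=> ltpM; rewrite val_insubd size_cat size_nseq /= ifT //; apply/eqP; lia.
have pad_prog_inj : {in [set t | KC phi (e t) < M] &,
                      injective (fun t => pad (prog (e t)))}.
  move=> t1 t2; rewrite !inE -!(proj1 (prog_spec _)) => lt1 lt2 /(congr1 val).
  rewrite !val_pad // => /nseq_false_true_inj eq_prog.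
  by apply/e_inj/Some_inj; rewrite -(proj2 (prog_spec _)) eq_prog (proj2 (prog_spec _)).
by apply: leq_trans (leq_card_in _ _ pad_prog_inj) _; rewrite card_tuple card_bool.
Qed.

End Complexity.

Lemma gamma_subU (k n : nat) (S S1 S2 : word k -> Prop) :
  (forall w, size w = n -> S w -> S1 w \/ S2 w) ->
  gamma n S <= gamma n S1 + gamma n S2.
Proof.
move=> cover; rewrite /gamma; apply: leq_trans (leq_card_setU _ _).
apply: subset_leq_card; apply/subsetP => t; rewrite !inE => /pboolP St.
by case: (cover t (size_tuple t) St) => [/pboolP -> | /pboolP ->]; rewrite ?orbT.
Qed.

Lemma gamma_KC_lt (k : nat) (phi : seq bool -> option (seq bool))
    (h : word k -> seq bool) (n M : nat) :
  universal_prf phi -> injective h ->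
  gamma n (fun w => KC phi (h w) < M) <= expn 2 M.
Proof.
move=> phi_univ h_inj; rewrite /gamma.
have -> : [set t : n.-tuple (letter k) | pbool (KC phi (h t) < M)] =
          [set t | KC phi ((h \o val) t) < M].
  by apply/setP => t; rewrite !inE; apply/idP/idP => /pboolP.
by apply: card_KC_lt => // t1 t2 /h_inj /val_inj.
Qed.

Lemma reduced_word_cons2 (k : nat) (a b : letter k) (w : word k) :
  reduced_word [:: a, b & w] = (b != linv a) && reduced_word (b :: w).
Proof. by []. Qed.

Lemma cyc_reduced_positive (k : nat) (w : word k) :
  all (fun a : letter k => ~~ a.2) w -> cyc_reduced w.
Proof.
have neq_linv (a b : letter k) : ~~ a.2 -> ~~ b.2 -> b != linv a.
  by move=> a_pos b_pos; apply: contraNneq b_pos => ->.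
move=> w_pos; apply/andP; split.
- elim: w w_pos => [|a [|b w] IH] // /and3P [a_pos b_pos w_pos].
  by rewrite reduced_word_cons2 neq_linv // IH //= b_pos.
- case: w w_pos => [|a w] // w_pos; apply: neq_linv; first by case/andP: w_pos.
  by apply: (allP w_pos); rewrite /= mem_last.
Qed.

Lemma expn_le_gamma_CR (k n : nat) : expn k n <= gamma n (@CR k).
Proof.
pose pos (t : n.-tuple 'I_k) : n.-tuple (letter k) := map_tuple (fun i => (i, false)) t.
have pos_inj : injective pos.
  by move=> t1 t2 /(congr1 val) /inj_map eq_t; apply/val_inj/eq_t => i j [].
rewrite -{1}[k]card_ord -card_tuple -cardsT -(card_imset _ pos_inj) /gamma.
apply: subset_leq_card; apply/subsetP => _ /imsetP [t _ ->].
by rewrite inE; apply/pboolP/cyc_reduced_positive; rewrite all_map; apply/allP.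
Qed.

Lemma INR_expn (a b : nat) : INR (expn a b) = (INR a ^ b)%R.
Proof. by elim: b => [|b IH] //; rewrite expnS mult_INR IH. Qed.

Lemma nat_between (r : R) : (0 <= r)%R -> exists N : nat, (r < INR N <= r + 1)%R.
Proof.
move=> r_ge0; have [up_gt up_le] := archimed r.
have up_ge0 : (0 <= up r)%Z by apply: le_IZR; lra.
by exists (Z.to_nat (up r)); rewrite INR_IZR_INZ Z2Nat.id //; lra.
Qed.

Lemma ln2_gt0 : (0 < ln 2)%R.
Proof. by rewrite -ln_1; apply: ln_increasing; lra. Qed.

Lemma log2_2k_sub1_lt (k : nat) : 1 < k -> (log2 (INR (2 * k - 1)) < 2 * log2 (INR k))%R.
Proof.
move=> lt1k; have k_ge2 : (2 <= INR k)%R by apply: (le_INR 2); apply/leP.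
have -> : INR (2 * k - 1) = (2 * INR k - 1)%R.
  by rewrite minus_INR ?mult_INR /=; [lra | apply/leP; lia].
have -> : (2 * log2 (INR k) = log2 (INR k * INR k))%R.
  by rewrite /log2 ln_mult; lra.
apply: Rmult_lt_compat_r; first by apply/Rinv_0_lt_compat/ln2_gt0.
by apply: ln_increasing; nra.
Qed.

Lemma log2_ge1 (x : R) : (2 <= x)%R -> (1 <= log2 x)%R.
Proof.
move=> x_ge2; rewrite /log2 -(Rinv_r (ln 2)); last by have := ln2_gt0; lra.
apply: Rmult_le_compat_r; first by left; apply/Rinv_0_lt_compat/ln2_gt0.
by case: (Req_dec x 2) => [->|x_ne2]; [lra | left; apply: ln_increasing; lra].
Qed.

Lemma Rpower_log2 (a x : R) : Rpower a x = Rpower 2 (x * log2 a).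
Proof.
rewrite /Rpower /log2; congr exp; field.
by have := ln2_gt0; lra.
Qed.

Lemma Rpower_threshold_le (k : nat) (c x : R) :
  (2 + c <= x * (2 * log2 (INR k) - log2 (INR (2 * k - 1))))%R ->
  (Rpower 2 (- c / 2 + x * log2 (INR (2 * k - 1)) / 2 + 1)
     <= / Rpower 2 c * Rpower (INR k) x)%R.
Proof.
move=> x_large; rewrite [Rpower (INR k) x]Rpower_log2 -Rpower_Ropp -Rpower_plus.
by apply: Rle_Rpower; nra.
Qed.

Lemma eventually_expn_threshold_le (k : nat) (c : R) : 1 < k ->
  exists n0 : nat, 1 < n0 /\ forall n, n0 <= n ->
    exists M : nat, (- c / 2 + INR n * log2 (INR (2 * k - 1)) / 2 < INR M)%R /\
      (INR (expn 2 M) <= / Rpower 2 c * INR (expn k n))%R.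
Proof.
move=> lt1k; set q := log2 (INR (2 * k - 1)); set d := (2 * log2 (INR k) - q)%R.
have d_gt0 : (0 < d)%R by have := log2_2k_sub1_lt lt1k; rewrite -/q /d; lra.
have q_ge1 : (1 <= q)%R by apply/log2_ge1/(le_INR 2)/leP; lia.
have [|n0 [n0_large _]] := @nat_between (Rmax 0 ((2 + c) / d) + Rabs c + 1).
  by have := Rmax_l 0 ((2 + c) / d); have := Rabs_pos c; lra.
have n0_gt1 : (1 < INR n0)%R by have := Rmax_l 0 ((2 + c) / d); have := Rabs_pos c; lra.
exists n0; split=> [|n /leP/le_INR le_n0n]; first by apply/ltP/INR_lt.
have n_dominates : (2 + c <= INR n * d)%R.
  have -> : (2 + c = (2 + c) / d * d)%R by field; lra.
  apply: Rmult_le_compat_r; first lra.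
  by have := Rmax_r 0 ((2 + c) / d); have := Rabs_pos c; lra.
have c_lt_n : (c < INR n)%R by have := Rle_abs c; have := Rmax_l 0 ((2 + c) / d); lra.
have [|M [T_lt_M M_le]] := @nat_between (- c / 2 + INR n * q / 2).
  have : (INR n * 1 <= INR n * q)%R by apply: Rmult_le_compat_l; [apply: pos_INR|].
  lra.
exists M; split=> //.
have INR2 : INR 2 = 2%R by rewrite /=; lra.
have k_pos : (0 < INR k)%R by apply/lt_0_INR/ltP; lia.
rewrite !INR_expn INR2 -!Rpower_pow //; last lra.
apply: Rle_trans (Rpower_threshold_le n_dominates).
by apply: Rle_Rpower; [lra | exact: M_le].
Qed.

Lemma Rdiv_ge_one_sub (G N B e : R) :
  (0 < N)%R -> (N <= G + B)%R -> (B <= e * N)%R -> (G / N >= 1 - e)%R.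
Proof.
move=> N_gt0 N_le B_le; apply: Rle_ge; apply: (Rmult_le_reg_r N) => //.
by rewrite /Rdiv Rmult_assoc Rinv_l; lra.
Qed.

Theorem proposition3p3 (k : nat) (hk : 1 < k)
  (phi : seq bool -> option (seq bool)) (hphi : universal_prf phi)
  (h : word k -> seq bool) (hh : recursive_bijection h)
  (c : R) (hc : (1 <= c)%R) :
  exists n0 : nat, 1 < n0 /\
    forall n : nat, n0 <= n ->
      (INR (gamma n (Zset phi h c)) / INR (gamma n (@CR k)) >= 1 - / Rpower 2 c)%R.
Proof.
(* The bound holds for every real c. *)
have h_inj : injective h by case: hh => /bij_inj.
have [n0 [n0_gt1 n0_large]] := eventually_expn_threshold_le c hk.
exists n0; split=> // n /n0_large [M [threshold_lt_M pow_M_le]].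
have CR_le : gamma n (@CR k) <= gamma n (Zset phi h c) + gamma n (fun w => KC phi (h w) < M).
  apply: gamma_subU => w size_w CR_w.
  have [/INR_lt/ltP C_lt_M | M_le_C] := Rlt_le_dec (INR (C2k phi h w)) (INR M); first by right.
  by left; split=> //; rewrite size_w; lra.
have low_le := gamma_KC_lt n M hphi h_inj.
have expn_le := expn_le_gamma_CR k n.
apply: (Rdiv_ge_one_sub (B := INR (gamma n (fun w => KC phi (h w) < M)))).
- by apply/lt_0_INR/ltP; apply: leq_trans expn_le; rewrite expn_gt0; lia.
- by rewrite -plus_INR; apply/le_INR/leP.
- apply: Rle_trans (le_INR _ _ (elimT leP low_le)) _; apply: Rle_trans pow_M_le _.
  apply/Rmult_le_compat_l/le_INR/leP => //.
  by left; apply/Rinv_0_lt_compat/exp_pos.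
Qed.
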